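(* Let $R$ be a hyperring. If $R/nil(R)$ has an idempotent different from its zero and identity elements, then $R$ has an idempotent $e$ with $e\notin\{0,1\}$.
   Context: Standing conventions. A hyperring means a commutative Krasner hyperring with identity: a set $R$ with a hyperoperation $+:R\times R\to\mathcal P^*(R)$ (nonempty subsets; for subsets $A,B$ one sets $A+B=\bigcup_{a\in A,b\in B}a+b$) and a binary operation $\cdot$ such that: $+$ is associative and commutative; there is $0\in R$ with $0+x=\{x\}$ for all $x$; every $x$ has a unique $-x$ with $0\in x+(-x)$; $z\in x+y$ implies $y\in -x+z$ and $x\in z-y$; $(R,\cdot)$ is a commutative monoid with identity $1$; $0\cdot x=0$; and $x(y+z)=xy+xz$. A hyperideal of $R$ is a nonempty $I\subseteq R$ with $a-b\subseteq I$ and $ra\in I$ for all $a,b\in I$, $r\in R$. $nil(R)=\{x\in R: x^n=0\text{ for some }n\in\mathbb N\}$ (a hyperideal). For a hyperideal $I$, the quotient hyperring $R/I=\{x+I:x\in R\}$ has operations $(x+I)+(y+I)=\{z+I: z\in x+y\}$ and $(x+I)(y+I)=xy+I$, zero $I$ and identity $1+I$. *)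

(* Commutative Krasner hyperrings with identity. *)
From Stdlib Require Import Arith.

(* A hyperaddition is encoded by its membership relation:
   hadd x y z  means  z \in x + y. *)
Record hyperring := HyperRing {
  carrier :> Type;
  hadd : carrier -> carrier -> carrier -> Prop;
  hmul : carrier -> carrier -> carrier;
  hzero : carrier;
  hone : carrier;
  hneg : carrier -> carrier;
  hadd_nonempty : forall x y, exists z, hadd x y z;
  (* associativity: (x + y) + z = x + (y + z) as sets *)
  hadd_assoc : forall x y z t,
    (exists u, hadd x y u /\ hadd u z t) <-> (exists v, hadd y z v /\ hadd x v t);
  hadd_comm : forall x y z, hadd x y z <-> hadd y x z;
  hadd_zero : forall x z, hadd hzero x z <-> z = x;
  hadd_neg : forall x, hadd x (hneg x) hzero;
  hneg_unique : forall x y, hadd x y hzero -> y = hneg x;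
  hadd_rev : forall x y z, hadd x y z -> hadd (hneg x) z y /\ hadd z (hneg y) x;
  hmul_assoc : forall x y z, hmul x (hmul y z) = hmul (hmul x y) z;
  hmul_comm : forall x y, hmul x y = hmul y x;
  hmul_one : forall x, hmul hone x = x;
  hmul_zero : forall x, hmul hzero x = hzero;
  (* x(y + z) = xy + xz as sets *)
  hmul_distr : forall x y z t,
    (exists w, hadd y z w /\ t = hmul x w) <-> hadd (hmul x y) (hmul x z) t
}.

Arguments hadd {h}. Arguments hmul {h}. Arguments hzero {h}.
Arguments hone {h}. Arguments hneg {h}.

Fixpoint hpow {R : hyperring} (x : R) (n : nat) : R :=
  match n with
  | O => hone
  | S m => hmul x (hpow x m)
  end.

Definition hyperideal {R : hyperring} (I : R -> Prop) : Prop :=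
  (exists a, I a) /\
  (forall a b z, I a -> I b -> hadd a (hneg b) z -> I z) /\
  (forall r a, I a -> I (hmul r a)).

Definition nilR (R : hyperring) : R -> Prop :=
  fun x => exists n : nat, hpow x n = hzero.

(* The coset x + I = { z | z \in x + i for some i \in I }, an element of R/I. *)
Definition coset {R : hyperring} (I : R -> Prop) (x : R) : R -> Prop :=
  fun z => exists i, I i /\ hadd x i z.

(* Equality of elements of R/I (equality of cosets as subsets of R). *)
Definition coset_eq {R : hyperring} (X Y : R -> Prop) : Prop :=
  forall z, X z <-> Y z.

(* (x+I) is an idempotent of the quotient R/I different from its zero I = 0+I
   and its identity 1+I; multiplication in R/I is (x+I)(y+I) = xy+I. *)
Definition quot_nontrivial_idempotent {R : hyperring} (I : R -> Prop) (x : R) : Prop :=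
  coset_eq (coset I (hmul x x)) (coset I x) /\
  ~ coset_eq (coset I x) (coset I hzero) /\
  ~ coset_eq (coset I x) (coset I hone).

(* If x is idempotent modulo nil(R), reversibility turns x - x^2 into the product x w
   of x with some w in 1 - x; so 1 is in x + w and x w is nilpotent, say (x w)^N = 0.
   Expanding 1 = 1^(2N) in (x + w)^(2N), every monomial x^i w^j with i + j = 2N lies in
   x^N R or in w^N R, whence 1 is in e + f with e in x^N R, f in w^N R.  Then e f = 0,
   so e = e 1 lies in e^2 + e f = {e^2}.  If e were 0 then f = 1 and x would be
   nilpotent; if e were 1 then w would be nilpotent and x + nil(R) = 1 + nil(R). *)

From Stdlib Require Import Arith Lia.

Section Hyperring.

Variable R : hyperring.
Implicit Types a b x y z w : R.

Lemma hmulr0 x : hmul x hzero = hzero.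
Proof. rewrite hmul_comm. apply hmul_zero. Qed.

Lemma hmulr1 x : hmul x hone = x.
Proof. rewrite hmul_comm. apply hmul_one. Qed.

Lemma hadd_r0 x : hadd x hzero x.
Proof. apply hadd_comm, hadd_zero. reflexivity. Qed.

Lemma hadd_r0_eq x z : hadd x hzero z -> z = x.
Proof. intro H. apply hadd_comm, hadd_zero in H. exact H. Qed.

Lemma hnegK x : hneg (hneg x) = x.
Proof. symmetry. apply hneg_unique, hadd_comm, hadd_neg. Qed.

Lemma hmul_hadd x y z w : hadd y z w -> hadd (hmul x y) (hmul x z) (hmul x w).
Proof. intro H. apply hmul_distr. exists w. split; auto. Qed.

Lemma hmulrN x y : hmul x (hneg y) = hneg (hmul x y).
Proof. apply hneg_unique. rewrite <- (hmulr0 x). apply hmul_hadd, hadd_neg. Qed.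

Lemma hmulNr x y : hmul (hneg x) y = hneg (hmul x y).
Proof. rewrite hmul_comm, hmulrN, hmul_comm. reflexivity. Qed.

Lemma hadd_interchange a1 b1 a2 b2 u v w :
  hadd a1 b1 u -> hadd a2 b2 v -> hadd u v w ->
  exists s t, hadd a1 a2 s /\ hadd b1 b2 t /\ hadd s t w.
Proof.
  intros Hu Hv Hw.
  destruct (proj1 (hadd_assoc R a1 b1 v w) (ex_intro _ u (conj Hu Hw))) as [v' [Hv' Hw']].
  apply hadd_comm in Hv'.
  destruct (proj1 (hadd_assoc R a2 b2 b1 v') (ex_intro _ v (conj Hv Hv'))) as [t [Ht Hv'']].
  destruct (proj2 (hadd_assoc R a1 a2 t w) (ex_intro _ v' (conj Hv'' Hw'))) as [s [Hs Hst]].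
  exists s, t. split; [exact Hs|split; [apply hadd_comm; exact Ht|exact Hst]].
Qed.

Lemma hpowD x i j : hpow x (i + j) = hmul (hpow x i) (hpow x j).
Proof.
  induction i as [|i IH]; simpl.
  - rewrite hmul_one. reflexivity.
  - rewrite IH, hmul_assoc. reflexivity.
Qed.

Lemma hpowMn x y n : hpow (hmul x y) n = hmul (hpow x n) (hpow y n).
Proof.
  induction n as [|n IH]; simpl.
  - rewrite hmul_one. reflexivity.
  - rewrite IH, !hmul_assoc. f_equal.
    rewrite <- !hmul_assoc. f_equal. apply hmul_comm.
Qed.

Lemma hpow1n n : hpow (@hone R) n = hone.
Proof. induction n as [|n IH]; simpl; [|rewrite IH, hmul_one]; reflexivity. Qed.

Definition psum (A B : R) (y : R) : Prop :=
  exists p q, hadd (hmul A p) (hmul B q) y.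

Lemma psum_mul A B r y : psum A B y -> psum A B (hmul r y).
Proof.
  intros [p [q H]]. exists (hmul r p), (hmul r q).
  apply (hmul_hadd r) in H.
  rewrite !hmul_assoc, (hmul_comm R r A), (hmul_comm R r B), <- !hmul_assoc in H.
  exact H.
Qed.

Lemma psum_add A B u v w : psum A B u -> psum A B v -> hadd u v w -> psum A B w.
Proof.
  intros [p1 [q1 Hu]] [p2 [q2 Hv]] Hw.
  destruct (hadd_interchange _ _ _ _ _ _ _ Hu Hv Hw) as [s [t [Hs [Ht Hst]]]].
  apply hmul_distr in Hs. destruct Hs as [p [_ ->]].
  apply hmul_distr in Ht. destruct Ht as [q [_ ->]].
  exists p, q. exact Hst.
Qed.

Inductive hspan (S : R -> Prop) : R -> Prop :=
| hspan_base s : S s -> hspan S s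
| hspan_mul r y : hspan S y -> hspan S (hmul r y)
| hspan_add u v w : hspan S u -> hspan S v -> hadd u v w -> hspan S w.

Lemma hspan_hmul (S T : R -> Prop) z y :
  (forall s, S s -> hspan T (hmul z s)) -> hspan S y -> hspan T (hmul z y).
Proof.
  intros HS Hy. induction Hy as [s Hs|r y _ IH|u v w _ IHu _ IHv Huvw].
  - auto.
  - rewrite hmul_assoc, (hmul_comm R z r), <- hmul_assoc. apply hspan_mul, IH.
  - eapply hspan_add; [exact IHu|exact IHv|apply hmul_hadd, Huvw].
Qed.

Lemma hspan_psum (S : R -> Prop) A B y :
  (forall s, S s -> psum A B s) -> hspan S y -> psum A B y.
Proof.
  intros HS Hy. induction Hy as [s Hs|r y _ IH|u v w _ IHu _ IHv Huvw].
  - auto.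
  - apply psum_mul, IH.
  - exact (psum_add A B u v w IHu IHv Huvw).
Qed.

Definition monomials (a b : R) (k : nat) (s : R) : Prop :=
  exists i j, i + j = k /\ s = hmul (hpow a i) (hpow b j).

Lemma hpow_hspan_monomials a b z k :
  hadd a b z -> hspan (monomials a b k) (hpow z k).
Proof.
  intro Hz. induction k as [|k IH]; simpl.
  - apply hspan_base. exists 0, 0. simpl. rewrite hmul_one. split; reflexivity.
  - apply (hspan_hmul (monomials a b k)); [|exact IH].
    intros s [i [j [Hij ->]]].
    pose proof (hmul_hadd (hmul (hpow a i) (hpow b j)) _ _ _ Hz) as H.
    rewrite (hmul_comm R _ z) in H.
    eapply hspan_add; [apply hspan_base|apply hspan_base|exact H].
    + exists (S i), j. split; [lia|]. simpl.
      rewrite (hmul_comm R _ a), hmul_assoc. reflexivity.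
    + exists i, (S j). split; [lia|]. simpl.
      rewrite <- hmul_assoc, (hmul_comm R _ b). reflexivity.
Qed.

Lemma monomial_psum a b m n i j :
  i + j = m + n -> psum (hpow a m) (hpow b n) (hmul (hpow a i) (hpow b j)).
Proof.
  intro Hij. destruct (le_lt_dec m i) as [Hm|Hm].
  - exists (hmul (hpow a (i - m)) (hpow b j)), hzero.
    rewrite hmulr0, hmul_assoc, <- hpowD. replace (m + (i - m)) with i by lia.
    apply hadd_r0.
  - exists hzero, (hmul (hpow a i) (hpow b (j - n))).
    rewrite hmulr0. apply hadd_zero.
    rewrite hmul_assoc, (hmul_comm R _ (hpow a i)), <- hmul_assoc, <- hpowD.
    do 2 f_equal. lia.
Qed.

Lemma hpow_psum a b z m n :
  hadd a b z -> psum (hpow a m) (hpow b n) (hpow z (m + n)).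
Proof.
  intro Hz. apply (hspan_psum (monomials a b (m + n))).
  - intros s [i [j [Hij ->]]]. apply monomial_psum, Hij.
  - apply hpow_hspan_monomials, Hz.
Qed.

Lemma nil_hmul r x : nilR R x -> nilR R (hmul r x).
Proof.
  intros [n Hn]. exists n. rewrite hpowMn, Hn. apply hmulr0.
Qed.

Lemma nil_hneg x : nilR R x -> nilR R (hneg x).
Proof.
  intro Hx. replace (hneg x) with (hmul (hneg hone) x) by (rewrite hmulNr, hmul_one; reflexivity).
  apply nil_hmul, Hx.
Qed.

Lemma nil_hadd a b z : nilR R a -> nilR R b -> hadd a b z -> nilR R z.
Proof.
  intros [m Hm] [n Hn] Hz. exists (m + n).
  destruct (hpow_psum a b z m n Hz) as [p [q Hpq]].
  rewrite Hm, Hn, !hmul_zero in Hpq. apply hadd_zero in Hpq. exact Hpq.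
Qed.

Lemma coset_nil_sub a d b :
  hadd a d b -> nilR R d -> forall z, coset (nilR R) a z -> coset (nilR R) b z.
Proof.
  intros Hb Hd z [i [Hi Hz]].
  apply hadd_rev in Hb. destruct Hb as [_ Ha].
  destruct (proj1 (hadd_assoc R b (hneg d) i z) (ex_intro _ a (conj Ha Hz)))
    as [v [Hv Hbv]].
  exists v. split; [|exact Hbv].
  eapply nil_hadd; [apply nil_hneg, Hd|exact Hi|exact Hv].
Qed.

Lemma coset_nil_eq a d b :
  hadd a d b -> nilR R d -> coset_eq (coset (nilR R) a) (coset (nilR R) b).
Proof.
  intros Hb Hd z. split.
  - apply (coset_nil_sub a d b Hb Hd).
  - apply (coset_nil_sub b (hneg d) a); [apply hadd_rev, Hb|apply nil_hneg, Hd].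
Qed.

Lemma idempotent_mod_nil_split x :
  coset_eq (coset (nilR R) (hmul x x)) (coset (nilR R) x) ->
  exists w, hadd x w hone /\ nilR R (hmul x w).
Proof.
  intro Hid.
  assert (Hx : coset (nilR R) (hmul x x) x).
  { apply Hid. exists hzero. split; [exists 1; apply hmul_zero|apply hadd_r0]. }
  destruct Hx as [i [Hi Hxi]].
  apply hadd_rev in Hxi. destruct Hxi as [Hxi _]. apply hadd_comm in Hxi.
  rewrite <- (hmulr1 x) in Hxi at 1. rewrite <- hmulrN in Hxi.
  apply hmul_distr in Hxi. destruct Hxi as [w [Hw ->]].
  apply hadd_rev in Hw. destruct Hw as [_ Hw]. rewrite hnegK in Hw.
  exists w. split; [apply hadd_comm, Hw|exact Hi].
Qed.

Lemma idempotent_of_orthogonal (e f : R) :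
  hadd e f hone -> hmul e f = hzero -> hmul e e = e.
Proof.
  intros Hef Hef0. apply (hmul_hadd e) in Hef.
  rewrite Hef0, hmulr1 in Hef. symmetry. apply hadd_r0_eq, Hef.
Qed.

Lemma nil_of_cofactor_unit a b (q : R) N :
  hpow (hmul a b) N = hzero -> hmul (hpow b N) q = hone -> nilR R a.
Proof.
  intros Hab Hq. exists N.
  rewrite <- (hmulr1 (hpow a N)), <- Hq, hmul_assoc, <- hpowMn, Hab.
  apply hmul_zero.
Qed.

End Hyperring.

Theorem mainTheorem6 (R : hyperring) :
  (exists x : R, quot_nontrivial_idempotent (nilR R) x) ->
  exists e : R, hmul e e = e /\ e <> hzero /\ e <> hone.
Proof.
  intros [x [Hid [Hn0 Hn1]]].
  destruct (idempotent_mod_nil_split R x Hid) as [w [Hxw [N HN]]].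
  destruct (hpow_psum R x w hone N N Hxw) as [p [q Hpq]].
  rewrite hpow1n in Hpq.
  set (e := hmul (hpow x N) p) in Hpq. set (f := hmul (hpow w N) q) in Hpq.
  assert (Hef : hmul e f = hzero).
  { unfold e, f. rewrite <- hmul_assoc, (hmul_assoc R p), (hmul_comm R p),
      <- hmul_assoc, hmul_assoc, <- hpowMn, HN. apply hmul_zero. }
  exists e. split; [|split].
  - exact (idempotent_of_orthogonal R e f Hpq Hef).
  - intro He0. rewrite He0 in Hpq. apply hadd_zero in Hpq.
    apply Hn0, (coset_nil_eq R x (hneg x)); [apply hadd_neg|].
    apply nil_hneg, (nil_of_cofactor_unit R x w q N HN). symmetry. exact Hpq.
  - intro He1. apply Hn1, (coset_nil_eq R x w); [exact Hxw|].
    rewrite hmul_comm in HN. exact (nil_of_cofactor_unit R w x p N HN He1).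
Qed.
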